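(* Let $X$ be a Banach space, $(A_n)_{n\in\mathbb{Z}}$ a sequence of invertible bounded linear operators on $X$ with $\sup_n\lVert A_n\rVert<\infty$ admitting an exponential dichotomy, and let $1\le p<\infty$. For each sequence $(y_n)_{n\in\mathbb{Z}}\subset X$ with $\sum_{n\in\mathbb{Z}}\lVert y_{n+1}-A_ny_n\rVert^p<\infty$, there exists a unique sequence $(x_n)_{n\in\mathbb{Z}}\subset X$ with $x_{n+1}=A_nx_n$ for all $n\in\mathbb{Z}$ and $\sum_{n\in\mathbb{Z}}\lVert x_n-y_n\rVert^p<\infty$.
   Context: Exponential dichotomy: with $\mathcal A(m,n)=A_{m-1}\cdots A_n$ ($m>n$), $\mathrm{Id}$ ($m=n$), $A_m^{-1}\cdots A_{n-1}^{-1}$ ($m<n$), there exist projections $P_m$ on $X$ with $P_{m+1}A_m=A_mP_m$ for all $m$ and constants $C,\lambda>0$ with $\lVert\mathcal A(m,n)P_n\rVert\le Ce^{-\lambda(m-n)}$ for $m\ge n$ and $\lVert\mathcal A(m,n)(\mathrm{Id}-P_n)\rVert\le Ce^{-\lambda(n-m)}$ for $m\le n$. *)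

From HB Require Import structures.
From mathcomp Require Import all_boot all_order all_algebra.
From mathcomp Require Import all_classical all_reals all_analysis.
Set Implicit Arguments. Unset Strict Implicit. Unset Printing Implicit Defensive.
Import Order.TTheory GRing.Theory Num.Theory.
Import numFieldNormedType.Exports.
Local Open Scope classical_set_scope.
Local Open Scope ring_scope.

Section Defs.
Variables (R : realType) (X : normedModType R).

Definition bounded_linear (f : X -> X) : Prop :=
  (forall (a : R) (u v : X), f (a *: u + v) = a *: f u + f v) /\
  exists M : R, forall x : X, `|f x| <= M * `|x|.

(* forward products: prodA A n k = A_{n+k-1} ... A_n = A(n+k, n) *)
Fixpoint prodA (A : int -> X -> X) (n : int) (k : nat) : X -> X :=
  match k with
  | O => id
  | S k' => fun x => A (n + k'%:Z) (prodA A n k' x)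
  end.

(* backward products: prodAinv Ainv n k = A_{n-k}^{-1} ... A_{n-1}^{-1} = A(n-k, n) *)
Fixpoint prodAinv (Ainv : int -> X -> X) (n : int) (k : nat) : X -> X :=
  match k with
  | O => id
  | S k' => fun x => Ainv (n - k'.+1%:Z) (prodAinv Ainv n k' x)
  end.

Definition cocycle (A Ainv : int -> X -> X) (m n : int) : X -> X :=
  if (n <= m)%R then prodA A n `|m - n|%N else prodAinv Ainv n `|n - m|%N.

Definition exp_dichotomy (A Ainv : int -> X -> X) : Prop :=
  exists P : int -> X -> X,
    (forall n, bounded_linear (P n) /\ (forall x, P n (P n x) = P n x)) /\
    (forall m x, P (m + 1) (A m x) = A m (P m x)) /\
    exists C lam : R, 0 < C /\ 0 < lam /\
      (forall m n : int, (n <= m)%R -> forall x : X,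
         `|cocycle A Ainv m n (P n x)| <= C * expR (- lam * (m - n)%:~R) * `|x|) /\
      (forall m n : int, (m <= n)%R -> forall x : X,
         `|cocycle A Ainv m n (x - P n x)| <= C * expR (- lam * (n - m)%:~R) * `|x|).

Definition sumZ_finite (f : int -> R) : Prop :=
  (\esum_(i in [set: int]) (f i)%:E < +oo)%E.

End Defs.

(* With z_n := y_{n+1} - A_n y_n, the orbit is x := y - W, where W is the
   Green's function solution of W_{n+1} = A_n W_n + z_n,
     W_n = sum_{m<n} A(n,m+1) P_{m+1} z_m - sum_{m>=n} A(n,m+1) (I - P_{m+1}) z_m.
   Both kernels decay like C e^{-lam |n-m|}; spending half of that rate on the
   weights e^{-lam j/2}, |W_n| is at most a constant times any t dominating
   e^{-lam j/2} |z_{n-j-1}| and e^{-lam j/2} |z_{n+j}| for all j.  The choice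
   t^p = sum_j e^{-lam p j/2} (|z_{n-j-1}|^p + |z_{n+j}|^p) then sums over n to a
   multiple of sum_n |z_n|^p, so W is p-summable.  Two such orbits differ by a
   bounded orbit u; its stable part P_n u_n = A(n,n-k) P_{n-k} u_{n-k} is
   O(e^{-lam k}) for every k, and likewise its unstable part, so u = 0. *)

From HB Require Import structures.
From mathcomp Require Import all_boot all_order all_algebra.
From mathcomp Require Import all_classical all_reals all_analysis.
From mathcomp Require Import ring zify.
Import Order.TTheory GRing.Theory Num.Theory.
Import numFieldNormedType.Exports.
Local Open Scope classical_set_scope.
Local Open Scope ring_scope.
Set Implicit Arguments. Unset Strict Implicit. Unset Printing Implicit Defensive.

Section BoundedLinear.
Variables (R : realType) (X : normedModType R) (f : X -> X).
Hypothesis hf : bounded_linear f.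

Lemma bounded_linearD u v : f (u + v) = f u + f v.
Proof. by have := hf.1 1 u v; rewrite !scale1r. Qed.

Lemma bounded_linear0 : f 0 = 0.
Proof. by apply: (addIr (f 0)); rewrite -bounded_linearD !add0r. Qed.

Lemma bounded_linearB u v : f (u - v) = f u - f v.
Proof. by apply: (addIr (f v)); rewrite -bounded_linearD !subrK. Qed.

Lemma bounded_linear_cvg (u : nat -> X) (l : X) :
  u @ \oo --> l -> (fun n => f (u n)) @ \oo --> f l.
Proof.
have [M fM] := hf.2; set M' := `|M| + 1.
have M'_gt0 : 0 < M' by rewrite ltr_wpDl.
have fM' x : `|f x| <= M' * `|x|.
  by rewrite (le_trans (fM x)) // ler_wpM2r // (le_trans (ler_norm M)) ?lerDl.
move=> /cvgrPdist_lt ul; apply/cvgrPdist_lt => e e0; near=> t.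
rewrite -bounded_linearB (le_lt_trans (fM' _)) // -ltr_pdivlMl // mulrC.
by near: t; apply: ul; rewrite divr_gt0.
Unshelve. all: by end_near. Qed.

End BoundedLinear.

Lemma le_exp_decay_eq0 (R : realType) (a K lam : R) : 0 <= a -> 0 < lam ->
  (forall k : nat, a <= K * expR (- lam * k%:R)) -> a = 0.
Proof.
move=> a0 lam0 ha.
have decay : (fun k : nat => K * expR (- lam * k%:R)) @ \oo --> 0.
  rewrite (_ : (fun k => _) = geometric K (expR (- lam))).
    by apply: cvg_geometric; rewrite ger0_norm ?expR_ge0 // expR_lt1 oppr_lt0.
  by apply/funext => k; rewrite /geometric /= expRM_natr.
apply/le_anti; rewrite a0 andbT -(cvg_lim _ decay) //.
by apply: limr_ge; [exact: cvgP decay | exact: nearW].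
Qed.

Section Cocycle.
Variables (R : realType) (X : normedModType R) (A Ainv : int -> X -> X).

Lemma cocycle_prodA n k : cocycle A Ainv (n + k%:Z) n = prodA A n k.
Proof. by rewrite /cocycle lerDl addrAC subrr add0r. Qed.

Lemma cocycle_prodAinv n k : cocycle A Ainv (n - k%:Z) n = prodAinv Ainv n k.
Proof.
rewrite /cocycle (_ : n - (n - k%:Z) = k%:Z); last by ring.
case: k => [|k]; first by rewrite subr0 lexx subrr.
by rewrite ifF //; apply/negbTE; rewrite -ltNge; lia.
Qed.

Lemma exp_dichotomy_decay : exp_dichotomy A Ainv -> exists P : int -> X -> X,
  (forall m x, P (m + 1) (A m x) = A m (P m x)) /\
  exists C lam : R, 0 < C /\ 0 < lam /\
    (forall n k x, `|prodA A n k (P n x)| <= C * expR (- lam * k%:R) * `|x|) /\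
    (forall n k x, `|prodAinv Ainv n k (x - P n x)| <= C * expR (- lam * k%:R) * `|x|).
Proof.
move=> [P [_ [PA [C [lam [C0 [lam0 [stable unstable]]]]]]]].
exists P; split => //; exists C, lam; do 2!split => //; split => n k x.
- have := stable (n + k%:Z) n (lerDl _ _) x.
  by rewrite cocycle_prodA addrAC subrr add0r -pmulrn.
- have nk : n - k%:Z <= n by rewrite gerDl oppr_le0.
  have := unstable _ _ nk x; rewrite cocycle_prodAinv.
  by rewrite (_ : n - (n - k%:Z) = k%:Z) -?pmulrn //; ring.
Qed.

End Cocycle.

Section Uniqueness.
Variables (R : realType) (X : normedModType R) (A Ainv : int -> X -> X).
Hypothesis hA : forall n, bounded_linear (A n).
Hypothesis hAK : forall n, cancel (A n) (Ainv n).
Variables (P : int -> X -> X) (C lam : R).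
Hypothesis PA : forall m x, P (m + 1) (A m x) = A m (P m x).
Hypothesis C_ge0 : 0 <= C.
Hypothesis lam0 : 0 < lam.
Hypothesis stable_decay :
  forall n k x, `|prodA A n k (P n x)| <= C * expR (- lam * k%:R) * `|x|.
Hypothesis unstable_decay :
  forall n k x, `|prodAinv Ainv n k (x - P n x)| <= C * expR (- lam * k%:R) * `|x|.

Section Orbit.
Variable u : int -> X.
Hypothesis u_orbit : forall n, u (n + 1) = A n (u n).

Lemma orbit_stable n k : P (n + k%:Z) (u (n + k%:Z)) = prodA A n k (P n (u n)).
Proof.
elim: k => [|k IH]; first by rewrite addr0.
by rewrite (_ : n + k.+1%:Z = n + k%:Z + 1) ?u_orbit ?PA ?IH //; lia.
Qed.

Lemma orbit_unstable n k : u n - P n (u n) =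
  prodAinv Ainv (n + k%:Z) k (u (n + k%:Z) - P (n + k%:Z) (u (n + k%:Z))).
Proof.
elim: k n => [|k IH] n; first by rewrite addr0.
rewrite (_ : n + k.+1%:Z = n + 1 + k%:Z); last by lia.
rewrite /= -IH (_ : n + 1 + k%:Z - k.+1%:Z = n); last by lia.
by rewrite u_orbit PA -bounded_linearB // hAK.
Qed.

Lemma bounded_orbit_eq0 : (exists B, forall n, `|u n| <= B) -> forall n, u n = 0.
Proof.
move=> [B uB] n.
have Pu0 : P n (u n) = 0.
  apply/normr0_eq0/(@le_exp_decay_eq0 _ _ (C * B) lam) => // k.
  have -> : n = n - k%:Z + k%:Z by rewrite subrK.
  rewrite orbit_stable (le_trans (stable_decay _ _ _)) // mulrAC.
  by rewrite ler_wpM2r ?expR_ge0 ?ler_wpM2l.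
have : u n - P n (u n) = 0.
  apply/normr0_eq0/(@le_exp_decay_eq0 _ _ (C * B) lam) => // k.
  rewrite (orbit_unstable n k) (le_trans (unstable_decay _ _ _)) // mulrAC.
  by rewrite ler_wpM2r ?expR_ge0 ?ler_wpM2l.
by rewrite Pu0 subr0.
Qed.

End Orbit.

Lemma bounded_dist_orbits_eq (x1 x2 : int -> X) :
  (forall n, x1 (n + 1) = A n (x1 n)) -> (forall n, x2 (n + 1) = A n (x2 n)) ->
  (exists B, forall n, `|x1 n - x2 n| <= B) -> x1 = x2.
Proof.
move=> x1_orbit x2_orbit bounded; apply/funext => n; apply/subr0_eq.
apply: (bounded_orbit_eq0 (u := fun n => x1 n - x2 n)) bounded n => k.
by rewrite x1_orbit x2_orbit bounded_linearB.
Qed.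

End Uniqueness.

Section GeometricDomination.
Variables (R : realType) (X : completeNormedModType R) (f : nat -> X) (K r : R).
Hypotheses (r_ge0 : 0 <= r) (r_lt1 : r < 1).
Hypothesis f_le : forall j, `|f j| <= K * r ^+ j.

Let K_ge0 : 0 <= K.
Proof. by have := le_trans (normr_ge0 _) (f_le 0); rewrite expr0 mulr1. Qed.

Let geometric_cvg : series (geometric K r) @ \oo --> K / (1 - r).
Proof. by apply: cvg_geometric_series; rewrite ger0_norm. Qed.

Let normed_series_cvg : cvgn [normed series f].
Proof.
apply: (@series_le_cvg _ _ (geometric K r)) => //; last exact: cvgP geometric_cvg.
- by move=> j; exact: normr_ge0.
- by move=> j; rewrite /geometric /= mulr_ge0 ?exprn_ge0.
Qed.

Lemma geometric_dominated_cvg : cvgn (series f).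
Proof. exact: normed_cvg. Qed.

Lemma geometric_dominated_le : `|limn (series f)| <= K / (1 - r).
Proof.
apply: le_trans (lim_series_norm normed_series_cvg) _.
rewrite -(cvg_lim _ geometric_cvg) //.
by apply: lim_series_le => //; exact: cvgP geometric_cvg.
Qed.

End GeometricDomination.

Section NonnegativeSums.
Variable R : realType.
Local Open Scope ereal_scope.

Lemma esumZ_le (T : choiceType) (I : set T) (a : T -> \bar R) (c : R) :
  (0 <= c)%R -> (forall i, 0 <= a i) ->
  \esum_(i in I) (c%:E * a i) <= c%:E * \esum_(i in I) a i.
Proof.
move=> c0 a0; apply: ge_ereal_sup => _ [Y [finY YI] <-] /=.
rewrite -ge0_mule_fsumr //; apply: lee_wpmul2l; first by rewrite lee_fin.
by apply: ereal_sup_ubound; exists Y.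
Qed.

Lemma esum_ge_term (T : choiceType) (a : T -> \bar R) i :
  (forall i, 0 <= a i) -> a i <= \esum_(j in [set: T]) a j.
Proof.
move=> a0; apply: esum_ge; exists [set i]; last by rewrite fsbig_set1.
by split => //; exact: finite_set1.
Qed.

Lemma esum_int_shift (a : int -> \bar R) (g : int -> int) (c : int) :
  (forall n, g n = n + c)%R ->
  \esum_(n in [set: int]) a (g n) = \esum_(n in [set: int]) a n.
Proof.
move=> gE; rewrite [RHS](reindex_esum [set: int] [set: int] g a) //.
split => //; first by move=> x y _ _; rewrite !gE => /addIr.
by move=> y _; exists (y - c)%R => //; rewrite gE subrK.
Qed.

Lemma esum_int_nat_swap (a : int -> nat -> \bar R) : (forall i j, 0 <= a i j) ->
  \esum_(n in [set: int]) \esum_(j in [set: nat]) a n j =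
  \esum_(j in [set: nat]) \esum_(n in [set: int]) a n j.
Proof.
move=> a0.
rewrite (esum_esum (fun i j _ _ => a0 i j)) (esum_esum (fun i j _ _ => a0 j i)).
rewrite (reindex_esum ([set: nat] `*`` fun _ => [set: int]) _ (fun x => (x.2, x.1))) //.
split => //; first by move=> [i j] [k l] _ _ /= [-> ->].
by move=> [i j] _; exists (j, i).
Qed.

Lemma esum_geometric_lty (r : R) : (0 <= r)%R -> (r < 1)%R ->
  \esum_(j in [set: nat]) (r ^+ j)%:E < +oo.
Proof.
move=> r0 r1; rewrite -nneseries_esumT; last by move=> n; rewrite lee_fin exprn_ge0.
have cvg_r : cvgn (series (geometric 1 r)).
  by apply: is_cvg_geometric_series; rewrite ger0_norm.
suff -> : \sum_(j <oo) (r ^+ j)%:E = (limn (series (geometric 1 r)))%:E by exact: ltry.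
rewrite -EFin_lim //; congr (limn _); apply/funext => N /=.
by rewrite /series /= sumEFin; congr (_%:E); apply: eq_bigr => i _; rewrite mul1r.
Qed.

End NonnegativeSums.

Lemma le_powR_inv (R : realType) (x t p : R) : 0 < p -> 0 <= x -> 0 <= t ->
  x `^ p <= t -> x <= t `^ p^-1.
Proof.
move=> p0 x0 t0 xt.
rewrite -[x in x <= _](powRr1 x0) -(mulfV (lt0r_neq0 p0)) powRrM.
by apply: ge0_ler_powR => //; rewrite ?invr_ge0 ?ltW // nnegrE powR_ge0.
Qed.

Lemma sumZ_finite_bounded (R : realType) (X : normedModType R) (x : int -> X) (p : R) :
  0 < p -> sumZ_finite (fun n => `|x n| `^ p) -> exists B, forall n, `|x n| <= B.
Proof.
move=> p0; rewrite /sumZ_finite; set S := (\esum_(i in _) _)%E => Sfin.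
have S0 : (0 <= S)%E by apply: esum_ge0 => i _; rewrite lee_fin powR_ge0.
exists (fine S `^ p^-1) => n; apply: le_powR_inv => //; first exact: fine_ge0.
rewrite -lee_fin fineK ?ge0_fin_numE //.
by apply: (esum_ge_term (a := fun i => (`|x i| `^ p)%:E)) => i; rewrite lee_fin powR_ge0.
Qed.

Definition window_sum (R : realType) (a : int -> R) (rho : R) (n : int) : \bar R :=
  \esum_(j in [set: nat]) (rho ^+ j * (a (n - j%:Z - 1) + a (n + j%:Z)))%:E.

Section WindowSum.
Variables (R : realType) (a : int -> R) (rho : R).
Hypotheses (a_ge0 : forall n, 0 <= a n) (rho_ge0 : 0 <= rho) (rho_lt1 : rho < 1).
Local Open Scope ereal_scope.

Let term_ge0 n j : 0 <= (rho ^+ j * (a (n - j%:Z - 1) + a (n + j%:Z)))%:E.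
Proof. by rewrite lee_fin mulr_ge0 ?exprn_ge0 ?addr_ge0. Qed.

Lemma window_sum_ge0 n : 0 <= window_sum a rho n.
Proof. by apply: esum_ge0 => j _. Qed.

Lemma window_sum_ge n j :
  (rho ^+ j * (a (n - j%:Z - 1) + a (n + j%:Z)))%:E <= window_sum a rho n.
Proof. exact: (esum_ge_term (a := fun j => _%:E)). Qed.

Lemma esum_window_sum_lty : \esum_(n in [set: int]) (a n)%:E < +oo ->
  \esum_(n in [set: int]) window_sum a rho n < +oo.
Proof.
set Z := \esum_(n in _) _ => Zfin.
have Z0 : 0 <= Z by apply: esum_ge0 => n _; rewrite lee_fin.
have column_le j : \esum_(n in [set: int]) (rho ^+ j * (a (n - j%:Z - 1) + a (n + j%:Z)))%:E
    <= (Z + Z) * (rho ^+ j)%:E.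
  under eq_esum => n _ do rewrite EFinM EFinD.
  apply: le_trans (esumZ_le _ (exprn_ge0 _ rho_ge0) _) _ => [n|].
    by rewrite adde_ge0 ?lee_fin.
  rewrite esumD; last 2 first.
  - by move=> n _; rewrite lee_fin.
  - by move=> n _; rewrite lee_fin.
  have shiftl : \esum_(n in [set: int]) (a (n - j%:Z - 1))%:E = Z.
    by apply: (esum_int_shift (fun k => (a k)%:E) (c := - j%:Z - 1)) => n; ring.
  have shiftr : \esum_(n in [set: int]) (a (n + j%:Z))%:E = Z.
    exact: (esum_int_shift (fun k => (a k)%:E) (c := j%:Z)).
  by rewrite shiftl shiftr muleC.
have sum_rho_fin : \esum_(j in [set: nat]) (rho ^+ j)%:E \is a fin_num.
  by rewrite ge0_fin_numE ?esum_geometric_lty //; apply: esum_ge0 => j _; rewrite lee_fin exprn_ge0.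
rewrite /window_sum esum_int_nat_swap //.
apply: le_lt_trans (le_esum (fun j _ => column_le j)) _.
have Zfin_num : Z \is a fin_num by rewrite ge0_fin_numE.
rewrite -(fineK Zfin_num) -EFinD.
apply: le_lt_trans (esumZ_le _ _ _) _; first by rewrite addr_ge0 ?fine_ge0.
  by move=> j; rewrite lee_fin exprn_ge0.
by rewrite -(fineK sum_rho_fin) -EFinM ltry.
Qed.

End WindowSum.

Section Green.
Variables (R : realType) (X : completeNormedModType R) (A Ainv : int -> X -> X).
Hypothesis hA : forall n, bounded_linear (A n).
Hypothesis hAinvK : forall n, cancel (Ainv n) (A n).
Variables (P : int -> X -> X) (C lam : R).
Hypotheses (C0 : 0 < C) (lam0 : 0 < lam).
Hypothesis stable_decay :
  forall n k x, `|prodA A n k (P n x)| <= C * expR (- lam * k%:R) * `|x|.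
Hypothesis unstable_decay :
  forall n k x, `|prodAinv Ainv n k (x - P n x)| <= C * expR (- lam * k%:R) * `|x|.
Variable z : int -> X.
Hypothesis z_bounded : exists B, forall n, `|z n| <= B.

(* The terms m = n-j-1 and m = n+j of the two sums defining W_n. *)
Definition green_stable n j :=
  prodA A (n - j%:Z) j (P (n - j%:Z) (z (n - j%:Z - 1))).
Definition green_unstable n j :=
  prodAinv Ainv (n + j%:Z + 1) j.+1 (z (n + j%:Z) - P (n + j%:Z + 1) (z (n + j%:Z))).
Definition green n :=
  limn (series (green_stable n)) - limn (series (green_unstable n)).

Let C_ge0 : 0 <= C := ltW C0.

Let sigma := expR (- (lam / 2)).

Let sigma_ge0 : 0 <= sigma. Proof. exact: expR_ge0. Qed.

Let sigma_lt1 : sigma < 1. Proof. by rewrite expR_lt1 oppr_lt0 divr_gt0. Qed.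

Let decay_halve j (b t : R) : expR (- (lam / 2) * j%:R) * b <= t ->
  C * expR (- lam * j%:R) * b <= C * t * sigma ^+ j.
Proof.
move=> bt; rewrite -expRM_natr (_ : - lam * j%:R = - (lam / 2) * j%:R + - (lam / 2) * j%:R).
  by rewrite expRD -!mulrA ler_wpM2l // mulrC ler_wpM2r ?expR_ge0.
by rewrite -mulrDl -opprD -splitr.
Qed.

Lemma green_stable_le n j t : expR (- (lam / 2) * j%:R) * `|z (n - j%:Z - 1)| <= t ->
  `|green_stable n j| <= C * t * sigma ^+ j.
Proof. by move=> zt; apply: le_trans (stable_decay _ _ _) (decay_halve zt). Qed.

Lemma green_unstable_le n j t : expR (- (lam / 2) * j%:R) * `|z (n + j%:Z)| <= t ->
  `|green_unstable n j| <= C * t * sigma ^+ j.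
Proof.
move=> zt; apply: le_trans (unstable_decay _ _ _) (le_trans _ (decay_halve zt)).
by rewrite ler_wpM2r ?ler_wpM2l ?ler_expR ?mulNr ?lerN2 ?ler_pM2l ?ler_nat.
Qed.

Let weighted_le_bound : exists B, forall m (j : nat),
  expR (- (lam / 2) * j%:R) * `|z m| <= B.
Proof.
have [B zB] := z_bounded; exists B => m j.
apply: le_trans (zB m); rewrite -[leRHS]mul1r ler_wpM2r // expR_le1 mulNr oppr_le0.
by rewrite mulr_ge0 // divr_ge0 // ltW.
Qed.

Lemma green_stable_cvg n : cvgn (series (green_stable n)).
Proof.
have [B zB] := weighted_le_bound.
by apply: (geometric_dominated_cvg (K := C * B) sigma_ge0 sigma_lt1) => j; apply: green_stable_le.
Qed.

Lemma green_unstable_cvg n : cvgn (series (green_unstable n)).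
Proof.
have [B zB] := weighted_le_bound.
by apply: (geometric_dominated_cvg (K := C * B) sigma_ge0 sigma_lt1) => j; apply: green_unstable_le.
Qed.

Lemma series_green_stable_succ n N : series (green_stable (n + 1)) N.+1 =
  P (n + 1) (z n) + A n (series (green_stable n) N).
Proof.
rewrite /series /= big_nat_recl // (big_morph _ (bounded_linearD (hA n)) (bounded_linear0 (hA n))).
congr (_ + _); first by rewrite /green_stable /= subr0 addrK.
apply: eq_bigr => j _; rewrite /green_stable /= (_ : n + 1 - j.+1%:Z = n - j%:Z); last by lia.
by rewrite subrK.
Qed.

Lemma series_green_unstable_succ n N : A n (series (green_unstable n) N.+1) =
  (z n - P (n + 1) (z n)) + series (green_unstable (n + 1)) N.
Proof.
rewrite /series /= (big_morph _ (bounded_linearD (hA n)) (bounded_linear0 (hA n))).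
rewrite big_nat_recl //; congr (_ + _).
  by rewrite /green_unstable /= !addr0 addrK hAinvK.
apply: eq_bigr => j _; rewrite /green_unstable /=.
rewrite (_ : n + j.+1%:Z + 1 - j.+2%:Z = n); last by lia.
by rewrite hAinvK (_ : n + j.+1%:Z = n + 1 + j%:Z) //; lia.
Qed.

Lemma green_succ n : green (n + 1) = z n + A n (green n).
Proof.
have stable_succ : limn (series (green_stable (n + 1))) =
    P (n + 1) (z n) + A n (limn (series (green_stable n))).
  apply/cvg_lim => //; rewrite -cvg_shiftS.
  under eq_fun do rewrite series_green_stable_succ.
  apply: cvgD; first exact: cvg_cst.
  exact: (bounded_linear_cvg (hA n) (@green_stable_cvg n)).
have unstable_succ : A n (limn (series (green_unstable n))) =
    (z n - P (n + 1) (z n)) + limn (series (green_unstable (n + 1))).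
  have := bounded_linear_cvg (hA n) (@green_unstable_cvg n).
  rewrite -cvg_shiftS; under eq_fun do rewrite series_green_unstable_succ.
  move=> shifted_cvg; rewrite -(cvg_lim _ shifted_cvg) //; apply: cvg_lim => //.
  apply: cvgD; first exact: cvg_cst.
  exact: green_unstable_cvg.
rewrite /green stable_succ bounded_linearB // unstable_succ.
set b := A n _; set d := z n.
by rewrite opprD opprB !addrA (addrAC (d + b)) (addrAC d) subrr add0r (addrC b).
Qed.

Lemma green_le n t :
  (forall j, expR (- (lam / 2) * j%:R) * `|z (n - j%:Z - 1)| <= t) ->
  (forall j, expR (- (lam / 2) * j%:R) * `|z (n + j%:Z)| <= t) ->
  `|green n| <= 2 * C / (1 - sigma) * t.
Proof.
move=> zl zr; apply: le_trans (ler_normB _ _) _.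
rewrite (_ : 2 * C / (1 - sigma) * t = C * t / (1 - sigma) + C * t / (1 - sigma)); last by ring.
apply: lerD.
- exact: geometric_dominated_le sigma_ge0 sigma_lt1 (fun j => green_stable_le (zl j)).
- exact: geometric_dominated_le sigma_ge0 sigma_lt1 (fun j => green_unstable_le (zr j)).
Qed.

Variable p : R.
Hypothesis p0 : 0 < p.

Let rho := expR (- (lam * p / 2)).

Let weighted_powR j (b : R) : 0 <= b ->
  (expR (- (lam / 2) * j%:R) * b) `^ p = rho ^+ j * b `^ p.
Proof.
move=> b0; rewrite powRM ?expR_ge0 // -expRM /rho -expRM_natr.
by congr (expR _ * _); ring.
Qed.

Lemma green_powR_le n : ((`|green n| `^ p)%:E <=
  ((2 * C / (1 - sigma)) `^ p)%:E * window_sum (fun k => `|z k| `^ p)%R rho n)%E.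
Proof.
set W := window_sum _ _ n.
have W0 : (0 <= W)%E by apply: window_sum_ge0 => [k|]; rewrite ?powR_ge0 ?expR_ge0.
set c := 2 * C / (1 - sigma).
have c0 : 0 < c by rewrite /c !mulr_gt0 // invr_gt0 subr_gt0.
have [Wfin | Winf] := boolP (W \is a fin_num); last first.
  have -> : W = +oo%E by move: Winf; rewrite ge0_fin_numE // ltey negbK => /eqP.
  by rewrite gt0_muley ?leey // lte_fin powR_gt0.
set t := fine W `^ p^-1.
have weighted_le j b : 0 <= b -> rho ^+ j * b `^ p <= fine W ->
    expR (- (lam / 2) * j%:R) * b <= t.
  move=> b0 bW; apply: le_powR_inv; rewrite ?mulr_ge0 ?expR_ge0 ?fine_ge0 //.
  by rewrite weighted_powR.
have term_le j : rho ^+ j * (`|z (n - j%:Z - 1)| `^ p + `|z (n + j%:Z)| `^ p) <= fine W.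
  by rewrite -lee_fin fineK //; apply: window_sum_ge => [k|]; rewrite ?powR_ge0 ?expR_ge0.
have green_ct : `|green n| <= c * t.
  apply: green_le => j; apply: weighted_le => //; apply: le_trans (term_le j).
    by rewrite ler_wpM2l ?exprn_ge0 ?expR_ge0 // lerDl powR_ge0.
  by rewrite ler_wpM2l ?exprn_ge0 ?expR_ge0 // lerDr powR_ge0.
rewrite -(fineK Wfin) -EFinM lee_fin.
have -> : fine W = t `^ p by rewrite -powRrM mulVf ?gt_eqF // powRr1 // fine_ge0.
rewrite -powRM ?(ltW c0) ?powR_ge0 //.
apply: ge0_ler_powR => //; [exact: ltW | by rewrite nnegrE |].
by rewrite nnegrE mulr_ge0 ?powR_ge0 // ltW.
Qed.

Lemma green_lp : sumZ_finite (fun k => `|z k| `^ p) ->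
  sumZ_finite (fun n => `|green n| `^ p).
Proof.
move=> z_lp; rewrite /sumZ_finite.
apply: le_lt_trans (le_esum (fun n _ => green_powR_le n)) _.
have window_ge0 n : (0 <= window_sum (fun k => `|z k| `^ p)%R rho n)%E.
  by apply: window_sum_ge0 => [k|]; rewrite ?powR_ge0 ?expR_ge0.
apply: le_lt_trans (esumZ_le _ (powR_ge0 _ _) window_ge0) _.
have rho_lt1 : rho < 1 by rewrite expR_lt1 oppr_lt0 !mulr_gt0.
have := esum_window_sum_lty (fun k => powR_ge0 _ _) (expR_ge0 _) rho_lt1 z_lp.
set S := (\esum_(n in _) _)%E => S_lty.
have S_fin : S \is a fin_num by rewrite ge0_fin_numE // esum_ge0.
by rewrite -(fineK S_fin) -EFinM ltry.
Qed.

End Green.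

Unset Implicit Arguments.

Theorem corollary3p9 (R : realType) (X : completeNormedModType R)
  (A Ainv : int -> X -> X) (p : R)
  (hA : forall n, bounded_linear (A n))
  (hAinv : forall n, bounded_linear (Ainv n))
  (hAK : forall n, cancel (A n) (Ainv n))
  (hAinvK : forall n, cancel (Ainv n) (A n))
  (hsup : exists M : R, forall n (x : X), `|A n x| <= M * `|x|)
  (hdich : exp_dichotomy A Ainv)
  (hp : 1 <= p)
  (y : int -> X)
  (hy : sumZ_finite (fun n => `|y (n + 1) - A n (y n)| `^ p)) :
  exists! x : int -> X,
    (forall n, x (n + 1) = A n (x n)) /\
    sumZ_finite (fun n => `|x n - y n| `^ p).
Proof.
have [P [PA [C [lam [C0 [lam0 [stable_decay unstable_decay]]]]]]] := exp_dichotomy_decay hdich.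
have p0 : 0 < p by apply: lt_le_trans hp.
pose z n := y (n + 1) - A n (y n).
have z_bounded := sumZ_finite_bounded p0 hy.
pose x n := y n - green A Ainv P z n.
have x_orbit n : x (n + 1) = A n (x n).
  rewrite /x (green_succ hA hAinvK C0 lam0 stable_decay unstable_decay z_bounded).
  by rewrite [RHS](bounded_linearB (hA n)) /z opprD opprB addrA [y _ + _]addrC subrK.
have x_lp : sumZ_finite (fun n => `|x n - y n| `^ p).
  rewrite /sumZ_finite; under eq_esum => n _ do rewrite /x addrAC subrr add0r normrN.
  exact: (green_lp C0 lam0 stable_decay unstable_decay p0 hy).
exists x; split => // x' [x'_orbit x'_lp].
have [B1 xy_le] := sumZ_finite_bounded p0 x_lp.
have [B2 x'y_le] := sumZ_finite_bounded p0 x'_lp.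
apply: (bounded_dist_orbits_eq hA hAK PA (ltW C0) lam0 stable_decay unstable_decay
  x_orbit x'_orbit).
exists (B1 + B2) => n.
rewrite (_ : x n - x' n = (x n - y n) - (x' n - y n)); last by rewrite opprB addrA subrK.
by rewrite (le_trans (ler_normB _ _)) ?lerD.
Qed.
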